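(* For every integer $b\geq 1$, $$\sum_{n\geq 1}\frac{H_n}{(2n+1)^{4b+1}}=-2\lambda(4b+1)\ln 2+\Big(2b+\frac12\Big)\lambda(4b+2)-\lambda(2b+1)^2-2\sum_{q=1}^{b-1}\lambda(2q+1)\lambda(4b-2q+1),$$ where an empty sum equals $0$.
   Context: $H_n=1+\frac12+\cdots+\frac1n$ is the $n$-th harmonic number. For real $s>1$, $\lambda(s)=\sum_{n\geq 1}\frac{1}{(2n-1)^s}=(1-2^{-s})\zeta(s)$. *)

From Stdlib Require Import Reals.
From Coquelicot Require Import Coquelicot.
Open Scope R_scope.

Fixpoint harmonic (n : nat) : R :=
  match n with
  | O => 0
  | S m => harmonic m + / INR (S m)
  end.

(* Dirichlet lambda function at a natural argument s (> 1):
   lambda(s) = sum_{n>=1} 1/(2n-1)^s = sum_{m>=0} 1/(2m+1)^s. *)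
Definition dlambda (s : nat) : R :=
  Series (fun m : nat => / (2 * INR m + 1) ^ s).

Fixpoint sum_1_to (f : nat -> R) (N : nat) : R :=
  match N with
  | O => 0
  | S k => sum_1_to f k + f (S k)
  end.

From Stdlib Require Import Reals Lra Lia.
From Coquelicot Require Import Coquelicot.
Open Scope R_scope.

(* Euler's double-series method.  For c >= 1 the kernel
     K(n, k) = 2 / ((2n+1) (2k+1)^(2c+1) ((2n+1)^2 - (2k+1)^2))      (n <> k)
   is dominated by 1/((2n+1)^2 (2k+1)^2), so its two iterated sums agree.  Summing over k,
   a partial-fraction expansion in 2k+1 produces the products lambda(2c-2t+3) lambda(2t+1)
   and a term (H_n + 2 ln 2)/(2n+1)^(2c+3), where H_n + 2 ln 2 is the sum of a series
   telescoping through H_2m - H_m -> ln 2.  Summing over n gives -(H_k + 2 ln 2)/(2k+1)^(2c+3)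
   up to a diagonal term.  Equating the totals determines sum_n H_n/(2n+1)^(2c+3); for
   2c+3 = 4b+1 the symmetric sum of products folds in half. *)

Lemma sum_Sn_R (a : nat -> R) n : sum_n a (S n) = sum_n a n + a (S n).
Proof. exact (sum_Sn a n). Qed.

Lemma is_lim_seq_inv_succ : is_lim_seq (fun n => / (INR n + 1)) 0.
Proof.
  replace (Finite 0) with (Rbar_inv p_infty) by reflexivity.
  apply is_lim_seq_inv; [|discriminate].
  eapply is_lim_seq_plus; [apply is_lim_seq_INR | apply is_lim_seq_const | reflexivity].
Qed.

Lemma is_series_Rplus (u v : nat -> R) a b :
  is_series u a -> is_series v b -> is_series (fun k => u k + v k) (a + b).
Proof. exact (@is_series_plus R_AbsRing R_NormedModule u v a b). Qed.

Lemma is_series_Rscal (c : R) (u : nat -> R) a :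
  is_series u a -> is_series (fun k => c * u k) (c * a).
Proof. exact (@is_series_scal_l R_AbsRing R_NormedModule c u a). Qed.

Lemma is_series_lin2 (u v : nat -> R) a b (al be : R) :
  is_series u a -> is_series v b -> is_series (fun k => al * u k + be * v k) (al * a + be * b).
Proof. intros Hu Hv; apply is_series_Rplus; apply is_series_Rscal; assumption. Qed.

Lemma is_series_lin3 (u v w : nat -> R) a b d (al be ga : R) :
  is_series u a -> is_series v b -> is_series w d ->
  is_series (fun k => al * u k + be * v k + ga * w k) (al * a + be * b + ga * d).
Proof.
  intros Hu Hv Hw. apply is_series_Rplus; [apply is_series_lin2|apply is_series_Rscal]; assumption.
Qed.

Lemma is_series_tail (a : nat -> R) (l : R) N :
  is_series a l -> is_series (fun n => a (S N + n)%nat) (l - sum_n a N).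
Proof.
  intros Ha. apply is_series_incr_n; [lia|].
  match goal with |- is_series _ ?x => replace x with l
    by (unfold plus; simpl; change (l = l - sum_n a N + sum_n a N :> R); ring) end.
  exact Ha.
Qed.

Definition delta (n k : nat) : R := if Nat.eq_dec k n then 1 else 0.

Lemma is_series_delta n : is_series (delta n) 1.
Proof.
  change (is_lim_seq (sum_n (delta n)) 1).
  apply (is_lim_seq_incr_n _ n), is_lim_seq_ext with (fun _ => 1); [|apply is_lim_seq_const].
  intros L. symmetry. induction L as [|L IHL].
  - simpl. destruct n as [|n]; [rewrite sum_O; reflexivity|].
    rewrite sum_Sn_R, (sum_n_ext_loc _ (fun _ => 0)), sum_n_const.
    + unfold delta. destruct Nat.eq_dec; [simpl; ring|congruence].
    + intros k Hk. unfold delta. destruct Nat.eq_dec; [lia|reflexivity].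
  - rewrite <- IHL. replace (S L + n)%nat with (S (L + n)) by lia.
    rewrite sum_Sn_R. unfold delta at 2. destruct Nat.eq_dec; [lia|ring].
Qed.

Lemma sum_n_Rabs_le (x y : nat -> R) N :
  (forall n, Rabs (x n) <= y n) -> Rabs (sum_n x N) <= sum_n y N.
Proof.
  intros H. induction N as [|N IH].
  - rewrite !sum_O. apply H.
  - rewrite !sum_Sn_R. eapply Rle_trans; [apply Rabs_triang|]. specialize (H (S N)). lra.
Qed.

Lemma is_series_Rabs_le (x y : nat -> R) (lx ly : R) :
  (forall n, Rabs (x n) <= y n) -> is_series x lx -> is_series y ly -> Rabs lx <= ly.
Proof.
  intros H Hx Hy.
  exact (is_lim_seq_le _ _ _ _ (fun N => sum_n_Rabs_le x y N H)
           (is_lim_seq_abs _ _ (Hx : is_lim_seq (sum_n x) lx)) (Hy : is_lim_seq (sum_n y) ly)).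
Qed.

Lemma is_series_swap (f : nat -> nat -> R) (a b row col : nat -> R) (la lb lr lc : R) :
  (forall n k, Rabs (f n k) <= a n * b k) -> is_series a la -> is_series b lb ->
  (forall n, is_series (f n) (row n)) -> (forall k, is_series (fun n => f n k) (col k)) ->
  is_series row lr -> is_series col lc -> lr = lc.
Proof.
  intros Hf Ha Hb Hrow Hcol Hr Hc.
  assert (Hsum : forall N, is_series (fun k => sum_n (fun n => f n k) N) (sum_n row N)).
  { induction N as [|N IH].
    - apply is_series_ext with (f 0%nat); [intros k; rewrite sum_O; reflexivity|].
      rewrite sum_O. apply Hrow.
    - apply is_series_ext with (fun k => sum_n (fun n => f n k) N + f (S N) k).
      + intros k. rewrite sum_Sn_R. reflexivity.
      + rewrite sum_Sn_R. apply is_series_Rplus; auto. }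
  assert (Htail : forall N, Rabs (lc - sum_n row N) <= lb * (la - sum_n a N)).
  { intros N. apply (is_series_Rabs_le (fun k => col k - sum_n (fun n => f n k) N)
                                      (fun k => b k * (la - sum_n a N))).
    - intros k. rewrite Rmult_comm.
      apply (is_series_Rabs_le (fun n => f (S N + n)%nat k) (fun n => a (S N + n)%nat * b k)).
      + intros n. apply Hf.
      + exact (is_series_tail (fun n => f n k) _ N (Hcol k)).
      + apply is_series_scal_r, is_series_tail, Ha.
    - exact (@is_series_minus R_AbsRing R_NormedModule _ _ _ _ Hc (Hsum N)).
    - apply is_series_scal_r, Hb. }
  assert (Hlim : is_series row lc).
  { change (is_lim_seq (sum_n row) lc).
    apply is_lim_seq_ext with (fun N => lc - (lc - sum_n row N)); [intros; ring|].
    replace (Finite lc) with (Finite (lc - 0)) by (f_equal; ring).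
    apply is_lim_seq_minus'; [apply is_lim_seq_const|].
    apply is_lim_seq_abs_0, is_lim_seq_le_le with (fun _ => 0) (fun N => lb * (la - sum_n a N)).
    - intros N. split; [apply Rabs_pos|apply Htail].
    - apply is_lim_seq_const.
    - replace (Finite 0) with (Finite (lb * (la - la))) by (f_equal; ring).
      apply is_lim_seq_mult'; [apply is_lim_seq_const|].
      apply is_lim_seq_minus'; [apply is_lim_seq_const|exact (Ha : is_lim_seq (sum_n a) la)]. }
  rewrite <- (is_series_unique _ _ Hr). exact (is_series_unique _ _ Hlim).
Qed.

Lemma harmonic_S n : harmonic (S n) = harmonic n + / (INR n + 1).
Proof. cbn [harmonic]. rewrite S_INR. reflexivity. Qed.

Lemma harmonic_ge0 n : 0 <= harmonic n.
Proof.
  induction n as [|n IH]; [simpl; lra|].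
  rewrite harmonic_S. pose proof (pos_INR n).
  assert (0 < / (INR n + 1)) by (apply Rinv_0_lt_compat; lra). lra.
Qed.

Lemma harmonic_le n : harmonic n <= INR n.
Proof.
  induction n as [|n IH]; [simpl; lra|].
  rewrite harmonic_S, S_INR. pose proof (pos_INR n).
  assert (/ (INR n + 1) <= 1) by (rewrite <- Rinv_1; apply Rinv_le_contravar; lra). lra.
Qed.

Lemma harmonic_add_bounds m a :
  0 <= harmonic (m + a) - harmonic m <= INR a / (INR m + 1).
Proof.
  induction a as [|a IH].
  - rewrite Nat.add_0_r. simpl. unfold Rdiv. lra.
  - rewrite Nat.add_succ_r, harmonic_S, S_INR, plus_INR.
    pose proof (pos_INR m). pose proof (pos_INR a).
    assert (0 < / (INR m + INR a + 1)) by (apply Rinv_0_lt_compat; lra).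
    assert (/ (INR m + INR a + 1) <= / (INR m + 1)) by (apply Rinv_le_contravar; lra).
    unfold Rdiv in *. rewrite Rmult_plus_distr_r. lra.
Qed.

Lemma is_lim_seq_harmonic_add a : is_lim_seq (fun m => harmonic (m + a) - harmonic m) 0.
Proof.
  apply is_lim_seq_le_le with (fun _ => 0) (fun m => INR a * / (INR m + 1)).
  - intros m. apply harmonic_add_bounds.
  - apply is_lim_seq_const.
  - replace (Finite 0) with (Finite (INR a * 0)) by (f_equal; ring).
    apply is_lim_seq_mult'; [apply is_lim_seq_const|apply is_lim_seq_inv_succ].
Qed.

Lemma ln_succ_bounds t : 1 <= t -> / (t + 1) <= ln (t + 1) - ln t <= / t.
Proof.
  intros Ht.
  assert (Hln : forall y, 0 < y -> ln y <= y - 1).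
  { intros y Hy. rewrite <- (ln_exp (y - 1)). apply ln_le; [exact Hy|].
    pose proof (exp_ineq1_le (y - 1)). lra. }
  rewrite <- ln_div by lra. split.
  - pose proof (Hln (t / (t + 1)) ltac:(apply Rdiv_lt_0_compat; lra)) as H.
    rewrite ln_div in H by lra. rewrite ln_div by lra.
    replace (t / (t + 1) - 1) with (- / (t + 1)) in H by (field; lra). lra.
  - pose proof (Hln ((t + 1) / t) ltac:(apply Rdiv_lt_0_compat; lra)) as H.
    replace ((t + 1) / t - 1) with (/ t) in H by (field; lra). exact H.
Qed.

Lemma harmonic_sub_ln_decr p k :
  0 <= (harmonic (S p) - ln (INR (S p))) - (harmonic (S p + k) - ln (INR (S p + k)))
    <= / INR (S p) - / INR (S p + k).
Proof.
  induction k as [|k IH].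
  - rewrite Nat.add_0_r. lra.
  - rewrite Nat.add_succ_r.
    assert (Ht : 1 <= INR (S p + k)) by (apply (le_INR 1); lia).
    pose proof (ln_succ_bounds _ Ht) as [A1 A2].
    rewrite (harmonic_S (S p + k)), (S_INR (S p + k)).
    assert (/ (INR (S p + k) + 1) <= / INR (S p + k)) by (apply Rinv_le_contravar; lra).
    lra.
Qed.

Lemma harmonic_double_sub_ln2 p :
  Rabs (harmonic (2 * S p) - harmonic (S p) - ln 2) <= / INR (S p).
Proof.
  pose proof (harmonic_sub_ln_decr p (S p)) as [A B].
  replace (S p + S p)%nat with (2 * S p)%nat in A, B by lia.
  assert (P : 0 < INR (S p)) by (apply lt_0_INR; lia).
  rewrite mult_INR, ln_mult in A, B by (exact P || (simpl; lra)).
  rewrite Rinv_mult in B. change (INR 2) with 2 in A, B.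
  assert (0 < / INR (S p)) by (apply Rinv_0_lt_compat; lra).
  apply Rabs_le. split; lra.
Qed.

Lemma is_lim_seq_harmonic_double : is_lim_seq (fun m => harmonic (2 * m) - harmonic m) (ln 2).
Proof.
  apply is_lim_seq_incr_1.
  apply is_lim_seq_ext with (fun p => ln 2 + (harmonic (2 * S p) - harmonic (S p) - ln 2));
    [intros; ring|].
  replace (Finite (ln 2)) with (Finite (ln 2 + 0)) by (f_equal; ring).
  apply is_lim_seq_plus'; [apply is_lim_seq_const|].
  apply is_lim_seq_abs_0, is_lim_seq_le_le with (fun _ => 0) (fun p => / (INR p + 1)).
  - intros p. split; [apply Rabs_pos|]. rewrite <- S_INR. apply harmonic_double_sub_ln2.
  - apply is_lim_seq_const.
  - apply is_lim_seq_inv_succ.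
Qed.

Definition oddR (m : nat) : R := 2 * INR m + 1.

Lemma oddR_ge1 n : 1 <= oddR n.
Proof. unfold oddR. pose proof (pos_INR n). lra. Qed.

Lemma oddR_pos n : 0 < oddR n.
Proof. pose proof (oddR_ge1 n). lra. Qed.

Lemma oddR_sub n k : oddR n - oddR k = 2 * (INR n - INR k).
Proof. unfold oddR. ring. Qed.

Lemma oddR_neq n k : n <> k -> oddR n - oddR k <> 0.
Proof.
  intros Hnk. rewrite oddR_sub. intros E. apply Hnk, INR_eq. lra.
Qed.

Lemma is_series_inv_succ_sub : is_series (fun n => / (INR n + 1) - / (INR n + 2)) 1.
Proof.
  assert (E : forall N, sum_n (fun n => / (INR n + 1) - / (INR n + 2)) N = 1 - / (INR (S N) + 1) :> R).
  { induction N as [|N IH].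
    - rewrite sum_O. simpl. field.
    - rewrite sum_Sn_R, IH, !S_INR. pose proof (pos_INR N). field. lra. }
  change (is_lim_seq (sum_n (fun n => / (INR n + 1) - / (INR n + 2))) 1).
  apply is_lim_seq_ext with (fun N => 1 - / (INR (S N) + 1)); [intros N; rewrite E; reflexivity|].
  replace (Finite 1) with (Finite (1 - 0)) by (f_equal; ring).
  apply is_lim_seq_minus'; [apply is_lim_seq_const|].
  apply (is_lim_seq_incr_1 (fun n => / (INR n + 1))), is_lim_seq_inv_succ.
Qed.

Lemma is_series_inv_oddR_pow r : (2 <= r)%nat -> is_series (fun m => / oddR m ^ r) (dlambda r).
Proof.
  intros Hr. apply Series_correct.
  apply (@ex_series_le R_AbsRing R_CompleteNormedModule _
           (fun n => 2 * (/ (INR n + 1) - / (INR n + 2)))).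
  - intros n. change (norm (/ oddR n ^ r)) with (Rabs (/ oddR n ^ r)).
    pose proof (oddR_ge1 n). pose proof (pos_INR n).
    rewrite Rabs_pos_eq by (apply Rlt_le, Rinv_0_lt_compat, pow_lt; lra).
    replace (2 * (/ (INR n + 1) - / (INR n + 2))) with (/ ((INR n + 1) * (INR n + 2) / 2))
      by (field; lra).
    apply Rinv_le_contravar; [nra|].
    apply Rle_trans with (oddR n ^ 2); [unfold oddR; nra|apply Rle_pow; auto].
  - exists (2 * 1). apply is_series_Rscal, is_series_inv_succ_sub.
Qed.

Definition inv_diff (n k : nat) : R := if Nat.eq_dec k n then 0 else / (2 * (INR n - INR k)).

(* For k <> n this is 2 (2n+1)^2 / ((2k+1) ((2n+1)^2 - (2k+1)^2)); splitting it into three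
   harmonic-like pieces makes its partial sums computable. *)
Definition phi (n k : nat) : R := 2 / oddR k + inv_diff n k - / (2 * INR n + 2 * INR k + 2).

Lemma sum_n_inv_oddR K :
  sum_n (fun k => / oddR k) K = harmonic (2 * K + 2) - harmonic (K + 1) / 2 :> R.
Proof.
  induction K as [|K IH].
  - rewrite sum_O. simpl. unfold oddR. simpl. field.
  - rewrite sum_Sn_R, IH.
    replace (2 * S K + 2)%nat with (S (S (2 * K + 2))) by lia.
    replace (S K + 1)%nat with (S (K + 1)) by lia.
    rewrite (harmonic_S (S (2 * K + 2))), (harmonic_S (2 * K + 2)), (harmonic_S (K + 1)).
    unfold oddR. rewrite !S_INR, !plus_INR, !mult_INR. simpl INR.
    pose proof (pos_INR K). field. lra.
Qed.

Lemma sum_n_inv_even n K :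
  sum_n (fun k => / (2 * INR n + 2 * INR k + 2)) K = (harmonic (n + K + 1) - harmonic n) / 2 :> R.
Proof.
  pose proof (pos_INR n). induction K as [|K IH].
  - rewrite sum_O, Nat.add_0_r, Nat.add_1_r, harmonic_S. simpl INR. field. lra.
  - rewrite sum_Sn_R, IH.
    replace (n + S K + 1)%nat with (S (n + K + 1)) by lia.
    rewrite harmonic_S, !S_INR, !plus_INR. simpl INR.
    pose proof (pos_INR K). field. lra.
Qed.

Lemma sum_n_inv_diff_lt K p :
  sum_n (fun k => / (2 * (INR (K + 1 + p) - INR k))) K = (harmonic (K + 1 + p) - harmonic p) / 2 :> R.
Proof.
  revert p. induction K as [|K IH]; intros p; pose proof (pos_INR p).
  - rewrite sum_O. simpl Nat.add. rewrite harmonic_S, S_INR. simpl INR. field. lra.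
  - rewrite sum_Sn_R.
    replace (S K + 1 + p)%nat with (K + 1 + S p)%nat by lia.
    rewrite IH. replace (K + 1 + S p)%nat with (S K + 1 + p)%nat by lia.
    replace (INR (S K + 1 + p) - INR (S K)) with (INR p + 1)
      by (rewrite !plus_INR, !S_INR; simpl; ring).
    rewrite harmonic_S. field. lra.
Qed.

Lemma sum_n_inv_diff n L :
  sum_n (inv_diff n) (n + L) = (harmonic n - harmonic L) / 2 :> R.
Proof.
  induction L as [|L IH].
  - rewrite Nat.add_0_r. destruct n as [|n].
    + rewrite sum_O. unfold inv_diff. simpl. field.
    + rewrite sum_Sn_R, (sum_n_ext_loc _ (fun k => / (2 * (INR (n + 1 + 0) - INR k)))).
      * rewrite sum_n_inv_diff_lt. replace (n + 1 + 0)%nat with (S n) by lia.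
        unfold inv_diff. destruct Nat.eq_dec; [|congruence].
        rewrite harmonic_S. cbn [harmonic]. pose proof (pos_INR n). field. lra.
      * intros k Hk. unfold inv_diff. destruct Nat.eq_dec; [lia|].
        replace (n + 1 + 0)%nat with (S n) by lia. reflexivity.
  - rewrite Nat.add_succ_r, sum_Sn_R, IH. unfold inv_diff at 1.
    destruct Nat.eq_dec; [lia|].
    rewrite harmonic_S, S_INR, plus_INR. pose proof (pos_INR L). field. lra.
Qed.

Lemma is_series_phi n : is_series (phi n) (harmonic n + 2 * ln 2).
Proof.
  change (is_lim_seq (sum_n (phi n)) (harmonic n + 2 * ln 2)).
  apply (is_lim_seq_incr_n _ n).
  apply is_lim_seq_ext with (fun L => harmonic n
     + 2 * (harmonic (2 * (L + (n + 1))) - harmonic (L + (n + 1)))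
     + (harmonic (L + (n + 1)) - harmonic L) / 2
     - (harmonic (L + (n + 1) + n) - harmonic (L + (n + 1))) / 2).
  { intros L.
    assert (Hsplit : forall K, sum_n (phi n) K = 2 * sum_n (fun k => / oddR k) K
      + sum_n (inv_diff n) K - sum_n (fun k => / (2 * INR n + 2 * INR k + 2)) K :> R).
    { induction K as [|K IH].
      - rewrite !sum_O. reflexivity.
      - rewrite !sum_Sn_R, IH. unfold phi. unfold Rdiv. ring. }
    rewrite Hsplit, sum_n_inv_oddR, sum_n_inv_even, (Nat.add_comm L n), sum_n_inv_diff.
    replace (2 * (n + L) + 2)%nat with (2 * (L + (n + 1)))%nat by lia.
    replace (n + (n + L) + 1)%nat with (L + (n + 1) + n)%nat by lia.
    replace (n + L + 1)%nat with (L + (n + 1))%nat by lia.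
    field. }
  replace (Finite (harmonic n + 2 * ln 2)) with
    (Finite (harmonic n + 2 * ln 2 + 0 / 2 - 0 / 2)) by (f_equal; field).
  apply is_lim_seq_minus'; [apply is_lim_seq_plus'; [apply is_lim_seq_plus'|]|].
  - apply is_lim_seq_const.
  - apply is_lim_seq_mult'; [apply is_lim_seq_const|].
    apply (is_lim_seq_incr_n (fun m => harmonic (2 * m) - harmonic m) (n + 1)).
    apply is_lim_seq_harmonic_double.
  - apply is_lim_seq_mult'; [apply is_lim_seq_harmonic_add|apply is_lim_seq_const].
  - apply is_lim_seq_mult'; [|apply is_lim_seq_const].
    apply (is_lim_seq_incr_n (fun m => harmonic (m + n) - harmonic m) (n + 1)).
    apply is_lim_seq_harmonic_add.
Qed.

Lemma sum_1_to_ext (f g : nat -> R) N :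
  (forall t, (1 <= t <= N)%nat -> f t = g t) -> sum_1_to f N = sum_1_to g N.
Proof.
  induction N as [|N IH]; intros H; simpl; [reflexivity|].
  rewrite IH, H; [reflexivity|lia|intros; apply H; lia].
Qed.

Lemma sum_1_to_scal_l a f N : sum_1_to (fun t => a * f t) N = a * sum_1_to f N.
Proof. induction N as [|N IH]; simpl; [ring|]. rewrite IH. ring. Qed.

Lemma sum_1_to_const x N : sum_1_to (fun _ => x) N = INR N * x.
Proof. induction N as [|N IH]; simpl sum_1_to; [simpl; ring|]. rewrite IH, S_INR. ring. Qed.

Lemma sum_1_to_add f m n :
  sum_1_to f (m + n) = sum_1_to f m + sum_1_to (fun u => f (m + u)%nat) n.
Proof.
  induction n as [|n IH]; [rewrite Nat.add_0_r; simpl; ring|].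
  rewrite Nat.add_succ_r. simpl. rewrite IH, Nat.add_succ_r. ring.
Qed.

Lemma sum_1_to_Sl f n : sum_1_to f (S n) = f 1%nat + sum_1_to (fun u => f (S u)) n.
Proof. induction n as [|n IH]; [simpl; ring|]. simpl in *. rewrite IH. ring. Qed.

Lemma sum_1_to_rev f n : sum_1_to f n = sum_1_to (fun u => f (n + 1 - u)%nat) n.
Proof.
  induction n as [|n IH]; [reflexivity|].
  rewrite (sum_1_to_Sl (fun u => f (S n + 1 - u)%nat)). cbn [sum_1_to]. rewrite IH.
  replace (S n + 1 - 1)%nat with (S n) by lia. simpl. ring.
Qed.

Lemma is_series_sum_1_to (g : nat -> nat -> R) (l : nat -> R) c :
  (forall t, (1 <= t <= c)%nat -> is_series (g t) (l t)) ->
  is_series (fun k => sum_1_to (fun t => g t k) c) (sum_1_to l c).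
Proof.
  induction c as [|c IH]; intros H.
  - apply is_series_ext with (fun k => 0 * delta 0 k); [intros; simpl; ring|].
    replace (sum_1_to l 0) with (0 * 1) by (simpl; ring).
    apply is_series_Rscal, is_series_delta.
  - apply is_series_Rplus; [apply IH; intros; apply H|apply H]; lia.
Qed.

Lemma sum_1_to_fold_pairs (g : nat -> R) b : (1 <= b)%nat ->
  sum_1_to (fun t => g (2 * b - t)%nat * g t) (2 * b - 1)
  = g b ^ 2 + 2 * sum_1_to (fun q => g q * g (2 * b - q)%nat) (b - 1).
Proof.
  intros Hb. destruct b as [|p]; [lia|].
  set (h := fun t => g (2 * S p - t)%nat * g t).
  set (k := fun q => g q * g (2 * S p - q)%nat).
  replace (S p - 1)%nat with p by lia.
  replace (2 * S p - 1)%nat with (p + S p)%nat by lia.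
  rewrite sum_1_to_add, sum_1_to_Sl.
  assert (Hlow : sum_1_to h p = sum_1_to k p).
  { apply sum_1_to_ext. intros t Ht. apply Rmult_comm. }
  assert (Hhigh : sum_1_to (fun u => h (p + S u)%nat) p = sum_1_to k p).
  { rewrite sum_1_to_rev. apply sum_1_to_ext. intros t Ht. unfold h, k.
    f_equal; f_equal; lia. }
  rewrite Hlow, Hhigh. unfold h.
  replace (2 * S p - (p + 1))%nat with (S p) by lia. replace (p + 1)%nat with (S p) by lia.
  ring.
Qed.

Lemma partial_fraction_inv_pow (i j : R) c : i <> 0 -> j <> 0 -> i ^ 2 - j ^ 2 <> 0 ->
  / (j ^ (2 * c + 1) * (i ^ 2 - j ^ 2)) =
  sum_1_to (fun t => / i ^ (2 * (c - t + 1)) * / j ^ (2 * t + 1)) c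
  + / i ^ (2 * c) * / (j * (i ^ 2 - j ^ 2)).
Proof.
  intros Hi Hj HD. induction c as [|c IH]; [cbn [sum_1_to Nat.mul Nat.add]; field; auto|].
  cbn [sum_1_to].
  rewrite (sum_1_to_ext _ (fun t => / i ^ 2 * (/ i ^ (2 * (c - t + 1)) * / j ^ (2 * t + 1)))).
  2: { intros t Ht. replace (2 * (S c - t + 1))%nat with (2 * (c - t + 1) + 2)%nat by lia.
       rewrite pow_add. field. repeat split; try apply pow_nonzero; auto. }
  assert (Hc : sum_1_to (fun t => / i ^ (2 * (c - t + 1)) * / j ^ (2 * t + 1)) c
              = / (j ^ (2 * c + 1) * (i ^ 2 - j ^ 2)) - / i ^ (2 * c) * / (j * (i ^ 2 - j ^ 2)))
    by (rewrite IH; ring).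
  rewrite sum_1_to_scal_l, Hc.
  replace (2 * (S c - S c + 1))%nat with 2%nat by lia.
  replace (2 * S c + 1)%nat with (2 * c + 1 + 2)%nat by lia.
  replace (2 * S c)%nat with (2 * c + 2)%nat by lia.
  rewrite !pow_add.
  assert (j ^ (2 * c + 1) <> 0) by (apply pow_nonzero; auto).
  assert (i ^ (2 * c) <> 0) by (apply pow_nonzero; auto).
  field. repeat split; auto; apply pow_nonzero; auto.
Qed.

Lemma oddR_sq_sub_neq n k : n <> k -> oddR n ^ 2 - oddR k ^ 2 <> 0.
Proof.
  intros Hnk. replace (oddR n ^ 2 - oddR k ^ 2) with ((oddR n - oddR k) * (oddR n + oddR k)) by ring.
  pose proof (oddR_pos n). pose proof (oddR_pos k).
  apply Rmult_integral_contrapositive. split; [apply oddR_neq, Hnk|lra].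
Qed.

(* The diagonal value makes the decompositions kernel_row and kernel_col hold at k = n too. *)
Definition kernel (c n k : nat) : R :=
  if Nat.eq_dec n k then - / (2 * oddR n ^ (2 * c + 4))
  else 2 / (oddR n * oddR k ^ (2 * c + 1) * (oddR n ^ 2 - oddR k ^ 2)).

Lemma kernel_row c n k : kernel c n k =
  2 * sum_1_to (fun t => / oddR n ^ (2 * (c - t + 1) + 1) * / oddR k ^ (2 * t + 1)) c
  + / oddR n ^ (2 * c + 3) * phi n k
  + (- (2 * INR c + 2) / oddR n ^ (2 * c + 4)) * delta n k.
Proof.
  pose proof (oddR_pos n) as Pn. pose proof (oddR_pos k) as Pk.
  unfold kernel, phi, inv_diff, delta.
  destruct (Nat.eq_dec n k) as [<-|Hnk]; destruct (Nat.eq_dec n n) as [_|]; try congruence.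
  - rewrite (sum_1_to_ext _ (fun _ => / oddR n ^ (2 * c + 4))), sum_1_to_const.
    2: { intros t Ht. rewrite <- Rinv_mult, <- pow_add. do 2 f_equal. lia. }
    replace (2 * INR n + 2 * INR n + 2) with (2 * oddR n) by (unfold oddR; ring).
    replace (2 * c + 4)%nat with (2 * c + 3 + 1)%nat by lia. rewrite pow_add, pow_1.
    assert (oddR n ^ (2 * c + 3) <> 0) by (apply pow_nonzero; lra).
    field. lra.
  - destruct (Nat.eq_dec k n) as [E|_]; [congruence|].
    rewrite (sum_1_to_ext _ (fun t => / oddR n * (/ oddR n ^ (2 * (c - t + 1)) * / oddR k ^ (2 * t + 1)))),
      sum_1_to_scal_l.
    2: { intros t Ht. rewrite pow_add, pow_1. field. repeat split; try apply pow_nonzero; lra. }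
    pose proof (partial_fraction_inv_pow (oddR n) (oddR k) c ltac:(lra) ltac:(lra)
                  (oddR_sq_sub_neq n k Hnk)) as PF.
    assert (E : sum_1_to (fun t => / oddR n ^ (2 * (c - t + 1)) * / oddR k ^ (2 * t + 1)) c
      = / (oddR k ^ (2 * c + 1) * (oddR n ^ 2 - oddR k ^ 2))
        - / oddR n ^ (2 * c) * / (oddR k * (oddR n ^ 2 - oddR k ^ 2))) by (rewrite PF; ring).
    rewrite E, Rmult_0_r, Rplus_0_r, <- oddR_sub.
    replace (2 * INR n + 2 * INR k + 2) with (oddR n + oddR k) by (unfold oddR; ring).
    rewrite !pow_add.
    pose proof (oddR_neq n k Hnk). pose proof (oddR_sq_sub_neq n k Hnk).
    assert (oddR n ^ (2 * c) <> 0) by (apply pow_nonzero; lra).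
    assert (oddR k ^ (2 * c) <> 0) by (apply pow_nonzero; lra).
    field. repeat split; auto; lra.
Qed.

Lemma kernel_col c n k : kernel c n k =
  (- / oddR k ^ (2 * c + 3)) * phi k n + / oddR k ^ (2 * c + 4) * delta k n.
Proof.
  pose proof (oddR_pos n) as Pn. pose proof (oddR_pos k) as Pk.
  unfold kernel, phi, inv_diff, delta.
  destruct (Nat.eq_dec n k) as [<-|Hnk].
  - replace (2 * INR n + 2 * INR n + 2) with (2 * oddR n) by (unfold oddR; ring).
    replace (2 * c + 4)%nat with (2 * c + 3 + 1)%nat by lia. rewrite pow_add, pow_1.
    assert (oddR n ^ (2 * c + 3) <> 0) by (apply pow_nonzero; lra).
    field. lra.
  - rewrite Rmult_0_r, Rplus_0_r, <- oddR_sub.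
    replace (2 * INR k + 2 * INR n + 2) with (oddR n + oddR k) by (unfold oddR; ring).
    replace (2 * c + 3)%nat with (2 * c + 1 + 2)%nat by lia. rewrite (pow_add _ (2 * c + 1) 2).
    pose proof (oddR_neq k n (not_eq_sym Hnk)). pose proof (oddR_sq_sub_neq n k Hnk).
    assert (oddR k ^ (2 * c + 1) <> 0) by (apply pow_nonzero; lra).
    field. repeat split; auto; lra.
Qed.

Lemma kernel_bound c n k : (1 <= c)%nat -> Rabs (kernel c n k) <= / oddR n ^ 2 * / oddR k ^ 2.
Proof.
  intros Hc. pose proof (oddR_ge1 n) as Pn. pose proof (oddR_ge1 k) as Pk.
  assert (Pn2 : 0 < oddR n ^ 2) by (apply pow_lt; lra).
  assert (Pk2 : 1 <= oddR k ^ 2) by (rewrite <- (pow1 2); apply pow_incr; lra).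
  rewrite <- Rinv_mult. unfold kernel. destruct (Nat.eq_dec n k) as [<-|Hnk].
  - assert (oddR n ^ 2 * oddR n ^ 2 <= oddR n ^ (2 * c + 4))
      by (rewrite <- pow_add; apply Rle_pow; [lra|lia]).
    rewrite Rabs_Ropp, Rabs_pos_eq by (apply Rlt_le, Rinv_0_lt_compat; nra).
    apply Rinv_le_contravar; nra.
  - assert (Hgap : 2 <= Rabs (oddR n - oddR k)).
    { rewrite oddR_sub, Rabs_mult, (Rabs_pos_eq 2) by lra.
      enough (1 <= Rabs (INR n - INR k)) by lra.
      destruct (Nat.lt_gt_cases n k) as [[H|H] _]; [exact Hnk| |];
        apply le_INR in H; rewrite S_INR in H; unfold Rabs; destruct Rcase_abs; lra. }
    assert (Hk : oddR k ^ 2 <= oddR k ^ (2 * c + 1)) by (apply Rle_pow; [lra|lia]).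
    assert (Hden : 2 * (oddR n ^ 2 * oddR k ^ 2)
                   <= Rabs (oddR n * oddR k ^ (2 * c + 1) * (oddR n ^ 2 - oddR k ^ 2))).
    { replace (oddR n ^ 2 - oddR k ^ 2) with ((oddR n - oddR k) * (oddR n + oddR k)) by ring.
      rewrite !Rabs_mult, (Rabs_pos_eq (oddR n)), (Rabs_pos_eq (oddR k ^ (2 * c + 1))),
        (Rabs_pos_eq (oddR n + oddR k)) by (try apply pow_le; lra).
      assert (2 * oddR n <= Rabs (oddR n - oddR k) * (oddR n + oddR k)) by nra.
      replace (2 * (oddR n ^ 2 * oddR k ^ 2)) with (oddR n * oddR k ^ 2 * (2 * oddR n)) by ring.
      apply Rmult_le_compat; nra. }
    unfold Rdiv. rewrite Rabs_mult, Rabs_inv, (Rabs_pos_eq 2) by lra.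
    apply Rle_trans with (2 * / (2 * (oddR n ^ 2 * oddR k ^ 2))).
    + apply Rmult_le_compat_l; [lra|]. apply Rinv_le_contravar; nra.
    + right. field. nra.
Qed.

Lemma is_series_kernel_row c n : is_series (kernel c n)
  (2 * sum_1_to (fun t => / oddR n ^ (2 * (c - t + 1) + 1) * dlambda (2 * t + 1)) c
   + / oddR n ^ (2 * c + 3) * (harmonic n + 2 * ln 2)
   + (- (2 * INR c + 2) / oddR n ^ (2 * c + 4)) * 1).
Proof.
  eapply is_series_ext; [intros k; symmetry; apply kernel_row|].
  apply is_series_lin3; [|apply is_series_phi|apply is_series_delta].
  apply (is_series_sum_1_to (fun t k => / oddR n ^ (2 * (c - t + 1) + 1) * / oddR k ^ (2 * t + 1))).
  intros t Ht. apply is_series_Rscal, is_series_inv_oddR_pow. lia.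
Qed.

Lemma is_series_kernel_col c k : is_series (fun n => kernel c n k)
  ((- / oddR k ^ (2 * c + 3)) * (harmonic k + 2 * ln 2) + / oddR k ^ (2 * c + 4) * 1).
Proof.
  eapply is_series_ext; [intros n; symmetry; apply kernel_col|].
  apply is_series_lin2; [apply is_series_phi|apply is_series_delta].
Qed.

Lemma ex_series_harmonic_div_oddR_pow r :
  (2 <= r)%nat -> ex_series (fun n => harmonic n / oddR n ^ S r).
Proof.
  intros Hr.
  apply (@ex_series_le R_AbsRing R_CompleteNormedModule _ (fun n => / oddR n ^ r)).
  2: { exists (dlambda r). apply is_series_inv_oddR_pow, Hr. }
  intros n. change (norm (harmonic n / oddR n ^ S r)) with (Rabs (harmonic n / oddR n ^ S r)).
  pose proof (oddR_ge1 n). pose proof (harmonic_ge0 n). pose proof (harmonic_le n).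
  assert (0 < oddR n ^ r) by (apply pow_lt; lra).
  assert (harmonic n <= oddR n) by (unfold oddR; lra).
  rewrite <- tech_pow_Rmult, Rabs_pos_eq by (apply Rmult_le_pos, Rlt_le, Rinv_0_lt_compat; nra).
  apply Rle_trans with (oddR n / (oddR n * oddR n ^ r)).
  - apply Rmult_le_compat_r; [apply Rlt_le, Rinv_0_lt_compat; nra|lra].
  - right. field. lra.
Qed.

Lemma kernel_double_sum c P : (1 <= c)%nat ->
  is_series (fun n => harmonic n / oddR n ^ (2 * c + 3)) P ->
  2 * sum_1_to (fun t => dlambda (2 * (c - t + 1) + 1) * dlambda (2 * t + 1)) c
    + (P + 2 * ln 2 * dlambda (2 * c + 3)) - (2 * INR c + 2) * dlambda (2 * c + 4)
  = - (P + 2 * ln 2 * dlambda (2 * c + 3)) + dlambda (2 * c + 4).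
Proof.
  intros Hc HP.
  set (u n := sum_1_to (fun t => / oddR n ^ (2 * (c - t + 1) + 1) * dlambda (2 * t + 1)) c).
  set (v n := 1 * (harmonic n / oddR n ^ (2 * c + 3)) + 2 * ln 2 * / oddR n ^ (2 * c + 3)).
  assert (Hu : is_series u (sum_1_to (fun t => dlambda (2 * (c - t + 1) + 1) * dlambda (2 * t + 1)) c)).
  { apply (is_series_sum_1_to (fun t n => / oddR n ^ (2 * (c - t + 1) + 1) * dlambda (2 * t + 1))).
    intros t Ht. apply is_series_scal_r, is_series_inv_oddR_pow. lia. }
  assert (Hv : is_series v (1 * P + 2 * ln 2 * dlambda (2 * c + 3)))
    by (apply is_series_lin2; [exact HP|apply is_series_inv_oddR_pow; lia]).
  assert (Hw : is_series (fun n => / oddR n ^ (2 * c + 4)) (dlambda (2 * c + 4)))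
    by (apply is_series_inv_oddR_pow; lia).
  enough (HE : 2 * sum_1_to (fun t => dlambda (2 * (c - t + 1) + 1) * dlambda (2 * t + 1)) c
                + 1 * (1 * P + 2 * ln 2 * dlambda (2 * c + 3))
                + (- (2 * INR c + 2)) * dlambda (2 * c + 4)
              = (-1) * (1 * P + 2 * ln 2 * dlambda (2 * c + 3)) + 1 * dlambda (2 * c + 4))
    by lra.
  apply (is_series_swap (kernel c) (fun n => / oddR n ^ 2) (fun n => / oddR n ^ 2)
    (fun n => 2 * u n + 1 * v n + (- (2 * INR c + 2)) * / oddR n ^ (2 * c + 4))
    (fun k => (-1) * v k + 1 * / oddR k ^ (2 * c + 4)) (dlambda 2) (dlambda 2)).
  - intros n k. apply kernel_bound, Hc.
  - apply is_series_inv_oddR_pow. lia.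
  - apply is_series_inv_oddR_pow. lia.
  - intros n.
    match goal with |- is_series _ ?l => replace l with
      (2 * u n + / oddR n ^ (2 * c + 3) * (harmonic n + 2 * ln 2)
       + (- (2 * INR c + 2) / oddR n ^ (2 * c + 4)) * 1) by (unfold v; unfold Rdiv; ring) end.
    apply is_series_kernel_row.
  - intros k.
    match goal with |- is_series _ ?l => replace l with
      ((- / oddR k ^ (2 * c + 3)) * (harmonic k + 2 * ln 2) + / oddR k ^ (2 * c + 4) * 1)
      by (unfold v; unfold Rdiv; ring) end.
    apply is_series_kernel_col.
  - apply is_series_lin3; assumption.
  - apply is_series_lin2; assumption.
Qed.

Lemma is_series_harmonic_div_oddR_pow c : (1 <= c)%nat ->
  is_series (fun n => harmonic n / oddR n ^ (2 * c + 3))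
    (- 2 * dlambda (2 * c + 3) * ln 2 + (INR c + 3 / 2) * dlambda (2 * c + 4)
     - sum_1_to (fun t => dlambda (2 * (c - t + 1) + 1) * dlambda (2 * t + 1)) c).
Proof.
  intros Hc.
  assert (HP : is_series (fun n => harmonic n / oddR n ^ (2 * c + 3))
                 (Series (fun n => harmonic n / oddR n ^ (2 * c + 3)))).
  { apply Series_correct. replace (2 * c + 3)%nat with (S (2 * c + 2)) by lia.
    apply ex_series_harmonic_div_oddR_pow. lia. }
  pose proof (kernel_double_sum c _ Hc HP) as HE.
  match goal with |- is_series _ ?l => replace l with
    (Series (fun n => harmonic n / oddR n ^ (2 * c + 3))) by lra end.
  exact HP.
Qed.

Theorem mainTheorem5 (b : nat) (hb : (1 <= b)%nat) :
  is_series (fun m : nat => harmonic (S m) / (2 * INR (S m) + 1) ^ (4 * b + 1))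
    (- 2 * dlambda (4 * b + 1) * ln 2
     + (2 * INR b + / 2) * dlambda (4 * b + 2)
     - (dlambda (2 * b + 1)) ^ 2
     - 2 * sum_1_to
             (fun q => dlambda (2 * q + 1) * dlambda (4 * b - 2 * q + 1)) (b - 1)).
Proof.
  pose proof (is_series_harmonic_div_oddR_pow (2 * b - 1) ltac:(lia)) as G.
  replace (2 * (2 * b - 1) + 3)%nat with (4 * b + 1)%nat in G by lia.
  replace (2 * (2 * b - 1) + 4)%nat with (4 * b + 2)%nat in G by lia.
  rewrite minus_INR, mult_INR in G by lia.
  rewrite (sum_1_to_ext _ (fun t => dlambda (2 * (2 * b - t) + 1) * dlambda (2 * t + 1)))
    in G by (intros; do 3 f_equal; lia).
  rewrite (sum_1_to_fold_pairs (fun t => dlambda (2 * t + 1))) in G by exact hb.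
  rewrite (sum_1_to_ext _ (fun q => dlambda (2 * q + 1) * dlambda (4 * b - 2 * q + 1))) in G
    by (intros; do 3 f_equal; lia).
  apply (is_series_incr_1 (fun n => harmonic n / oddR n ^ (4 * b + 1))).
  match goal with |- is_series _ ?l => replace l with
    (- 2 * dlambda (4 * b + 1) * ln 2 + (INR 2 * INR b - INR 1 + 3 / 2) * dlambda (4 * b + 2)
     - (dlambda (2 * b + 1) ^ 2
        + 2 * sum_1_to (fun q => dlambda (2 * q + 1) * dlambda (4 * b - 2 * q + 1)) (b - 1)))
  end; [exact G|].
  unfold plus, oddR. simpl. field. apply pow_nonzero. lra.
Qed.
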